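(* Let $H$ be a separable infinite-dimensional Hilbert space and let $\Phi:\mathcal{T}(H)\to\mathcal{T}(H)$ be the channel $\Phi(X)=\sum_{k=1}^\infty u_kv_k^*Xv_ku_k^*=\sum_{k=1}^\infty E_kXE_k^*$, where $E_k=u_kv_k^*$, $u_k,v_k\in H$, $\|u_k\|=1$ for all $k$, and $\sum_{k=1}^\infty v_kv_k^*=I_H$. Let $\Phi^*:B(H)\to B(H)$ be its dual map. Then an orthogonal projection $P\in B(H)$ satisfies $\Phi^*(P)=P$ if and only if $PE_k=E_kP$ for all $k$. In this case, all vectors $u_k$ and $v_k$ are eigenvectors of $P$. Moreover, any two orthogonal projections fixed by $\Phi^*$ commute.
   Context: $B(H)$ denotes bounded operators and $\mathcal{T}(H)$ the trace-class operators on $H$. The dual map $\Phi^*$ satisfies $\operatorname{Tr}(\Phi(X)Y)=\operatorname{Tr}(X\Phi^*(Y))$ for $X\in\mathcal{T}(H)$, $Y\in B(H)$; here $\Phi^*(Y)=\sum_k E_k^*YE_k$. (Such $\Phi$ are exactly the strongly entanglement breaking channels on $\mathcal{T}(H)$.) *)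

From HB Require Import structures.
From mathcomp Require Import all_boot all_order all_algebra.
From mathcomp Require Import reals.
From mathcomp.real_closed Require Import complex.
Set Implicit Arguments. Unset Strict Implicit. Unset Printing Implicit Defensive.
Import Order.TTheory GRing.Theory Num.Theory.
Local Open Scope ring_scope.

Section Hilbert.
Variables (R : realType) (V : lmodType R[i]) (ip : V -> V -> R[i]).
(* ip is linear in the first argument, conjugate-linear in the second. *)

Definition ipnorm (x : V) : R := Num.sqrt (complex.Re (ip x x)).

Definition vconverges (s : nat -> V) (x : V) : Prop :=
  forall e : R, 0 < e -> exists N : nat, forall n : nat, (N <= n)%N -> ipnorm (s n - x) < e.

Definition vcauchy (s : nat -> V) : Prop :=
  forall e : R, 0 < e -> exists N : nat, forall m n : nat, (N <= m)%N -> (N <= n)%N ->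
    ipnorm (s m - s n) < e.

Record separable_inf_hilbert : Prop := {
  ip_linear : forall (a : R[i]) (x y z : V), ip (a *: x + y) z = a * ip x z + ip y z;
  ip_conj_sym : forall x y : V, ip y x = Num.conj (ip x y);
  ip_pos : forall x : V, 0 <= ip x x;
  ip_definite : forall x : V, ip x x = 0 -> x = 0;
  hilbert_complete : forall s : nat -> V, vcauchy s -> exists x, vconverges s x;
  hilbert_separable : exists d : nat -> V,
    forall (x : V) (e : R), 0 < e -> exists n, ipnorm (x - d n) < e;
  hilbert_inf_dim : forall n : nat, exists w : 'I_n -> V,
    forall c : 'I_n -> R[i], \sum_(i < n) c i *: w i = 0 -> forall i, c i = 0 }.

Definition bounded_op (T : V -> V) : Prop :=
  (forall (a : R[i]) (x y : V), T (a *: x + y) = a *: T x + T y) /\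
  exists M : R, forall x : V, ipnorm (T x) <= M * ipnorm x.

Definition orth_proj (P : V -> V) : Prop :=
  bounded_op P /\ (forall x, P (P x) = P x) /\ (forall x y, ip (P x) y = ip x (P y)).

(** rank-one operator u v^* : x |-> <x, v> u ; its adjoint is v u^* *)
Definition rank1 (u v : V) : V -> V := fun x => ip x v *: u.

(** Phi^*(Y) = sum_k E_k^* Y E_k with E_k = u_k v_k^*, E_k^* = v_k u_k^*,
    the series being the (strong) limit of its partial sums *)
Definition dual_channel (u v : nat -> V) (Y : V -> V) (x : V) (y : V) : Prop :=
  vconverges (fun n => \sum_(k < n) rank1 (v k) (u k) (Y (rank1 (u k) (v k) x))) y.

Definition dual_fixed (u v : nat -> V) (P : V -> V) : Prop :=
  forall x, dual_channel u v P x (P x).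

Definition resolves_identity (v : nat -> V) : Prop :=
  forall x, vconverges (fun n => \sum_(k < n) rank1 (v k) (v k) x) x.

Definition eigvec (T : V -> V) (x : V) : Prop := x != 0 /\ exists l : R[i], T x = l *: x.

End Hilbert.

From mathcomp Require Import all_boot all_order all_algebra.
From mathcomp Require Import reals.
From mathcomp.real_closed Require Import complex.
From mathcomp Require Import ring.
Import Order.TTheory GRing.Theory Num.Theory.
Local Open Scope ring_scope.
Set Implicit Arguments. Unset Strict Implicit.

(** Writing [p_k = <P u_k, u_k>], the dual channel is
    [Phi^*(P) = sum_k p_k v_k v_k^*], while [I = sum_k v_k v_k^*].  If
    [Phi^*(P) = P] then [I - P = sum_k (1 - p_k) v_k v_k^*] with
    [0 <= p_k <= 1]; testing [P] on its kernel and [I - P] on its range,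
    the nonnegative series [sum_k p_k |<x, v_k>|^2] resp.
    [sum_k (1 - p_k) |<x, v_k>|^2] vanish termwise.  Hence [v_k] lies in
    the kernel of [P] when [p_k <> 1] and in its range when [p_k <> 0], so
    [P v_k = p_k v_k] and, if [v_k <> 0], [p_k] is [0] or [1], which forces
    [P u_k = p_k u_k] because [p_k = |P u_k|^2] and
    [1 - p_k = |u_k - P u_k|^2].  Then [P] commutes with every [u_k v_k^*];
    conversely such a [P] is fixed since [sum_k v_k v_k^* = I].  Two fixed
    projections are both diagonal in the family [(v_k)], so they commute. *)

Definition ccvg (R : rcfType) (a : nat -> R[i]) (l : R[i]) : Prop :=
  forall e : R[i], 0 < e -> exists N, forall n, (N <= n)%N -> `|a n - l| < e.

Section ComplexSequences.
Variable R : rcfType.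
Implicit Types (a b : nat -> R[i]) (c l m : R[i]).

Lemma ccvg_ext a b l : (forall n, a n = b n) -> ccvg a l -> ccvg b l.
Proof. by move=> eq_ab a_l e /a_l[N aN]; exists N => n /aN; rewrite eq_ab. Qed.

Lemma ccvgB a b l m : ccvg a l -> ccvg b m -> ccvg (fun n => a n - b n) (l - m).
Proof.
move=> a_l b_m e e_gt0.
have e2_gt0 : 0 < e / 2 by rewrite divr_gt0 ?ltr0n.
have [Na aN] := a_l _ e2_gt0; have [Nb bN] := b_m _ e2_gt0.
exists (maxn Na Nb) => n; rewrite geq_max => /andP[/aN a_lt /bN b_lt].
have -> : a n - b n - (l - m) = (a n - l) - (b n - m) by ring.
rewrite (splitr e); exact: le_lt_trans (ler_normB _ _) (ltrD a_lt b_lt).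
Qed.

Lemma ccvg_cst c l : ccvg (fun=> c) l -> l = c.
Proof.
move=> c_l; apply/eqP; rewrite eq_sym -subr_eq0; apply: contraT => cl_neq0.
have cl_gt0 : 0 < `|c - l| by rewrite normr_gt0.
by have [N /(_ N (leqnn N))] := c_l _ cl_gt0; rewrite ltxx.
Qed.

Lemma ccvg_unique a l m : ccvg a l -> ccvg a m -> l = m.
Proof.
move=> a_l a_m; apply/eqP; rewrite -subr_eq0; apply/eqP.
by apply: ccvg_cst; apply: ccvg_ext (ccvgB a_l a_m) => n; rewrite subrr.
Qed.

Lemma ccvg_psumr_eq0 a k : (forall j, 0 <= a j) ->
  ccvg (fun n => \sum_(j < n) a j) 0 -> a k = 0.
Proof.
move=> a_ge0 sum_a0; apply/eqP; apply: contraT => ak_neq0.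
have ak_gt0 : 0 < a k by rewrite lt_def ak_neq0 a_ge0.
have [N /(_ (maxn N k.+1) (leq_maxl _ _))] := sum_a0 _ ak_gt0.
have lt_k : (k < maxn N k.+1)%N by rewrite leq_max ltnSn orbT.
rewrite subr0 ger0_norm ?sumr_ge0 // (bigD1 (Ordinal lt_k)) //= => sum_lt.
have : a k < a k by apply: le_lt_trans sum_lt; rewrite lerDl sumr_ge0.
by rewrite ltxx.
Qed.

End ComplexSequences.

Section InnerProductSpace.
Variables (R : realType) (V : lmodType R[i]) (ip : V -> V -> R[i]).
Hypothesis ip_linearl : forall a x y z, ip (a *: x + y) z = a * ip x z + ip y z.
Hypothesis ipC : forall x y, ip y x = (ip x y)^*.
Hypothesis ip_ge0 : forall x, 0 <= ip x x.
Hypothesis ip_eq0 : forall x, ip x x = 0 -> x = 0.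

Lemma ipDl x y z : ip (x + y) z = ip x z + ip y z.
Proof. by have := ip_linearl 1 x y z; rewrite scale1r mul1r. Qed.

Lemma ip0l z : ip 0 z = 0.
Proof. by apply: (addrI (ip 0 z)); rewrite -ipDl !addr0. Qed.

Lemma ipZl a x z : ip (a *: x) z = a * ip x z.
Proof. by have := ip_linearl a x 0 z; rewrite addr0 ip0l addr0. Qed.

Lemma ipBl x y z : ip (x - y) z = ip x z - ip y z.
Proof. by rewrite ipDl -scaleN1r ipZl mulN1r. Qed.

Lemma ip_suml n (f : 'I_n -> V) z :
  ip (\sum_(j < n) f j) z = \sum_(j < n) ip (f j) z.
Proof.
elim: n f => [|n IHn] f; first by rewrite !big_ord0 ip0l.
by rewrite !big_ord_recr /= ipDl IHn.
Qed.

Lemma ip0r z : ip z 0 = 0.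
Proof. by rewrite ipC ip0l conjC0. Qed.

Lemma ipZr a x z : ip z (a *: x) = a^* * ip z x.
Proof. by rewrite ipC ipZl rmorphM /= -ipC. Qed.

Lemma ipBr x y z : ip z (x - y) = ip z x - ip z y.
Proof. by rewrite ipC ipBl rmorphB /= -!ipC. Qed.

Lemma ipl_inj x y : (forall w, ip x w = ip y w) -> x = y.
Proof.
move=> ip_xy; apply/eqP; rewrite -subr_eq0; apply/eqP/ip_eq0.
by rewrite ipBl ip_xy subrr.
Qed.

Lemma ipnormE x : ip x x = (ipnorm ip x ^+ 2)%:C%C.
Proof. by rewrite sqr_sqrtr ?RRe_real ?ger0_real // -lecR RRe_real ?ger0_real. Qed.

Lemma ip_CauchySchwarz x y : `|ip x y| ^+ 2 <= ip x x * ip y y.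
Proof.
have [yy0|yy_neq0] := eqVneq (ip y y) 0.
  by rewrite (ip_eq0 yy0) !ip0r normr0 mulr0 expr2 mul0r.
have yy_gt0 : 0 < ip y y by rewrite lt_def yy_neq0 ip_ge0.
set c := ip x y; set d := ip y y.
have ip_proj : ip (x - c / d *: y) (x - c / d *: y) = ip x x - `|c| ^+ 2 / d.
  rewrite !ipBl !ipBr !ipZl !ipZr -/c -/d [ip y x]ipC -/c normCK.
  rewrite rmorphM fmorphV /= -(ipC y y) -/d.
  by field; rewrite lt0r_neq0.
by rewrite -ler_pdivrMr // -subr_ge0 -ip_proj.
Qed.

Lemma vconverges_ext (s t : nat -> V) y :
  (forall n, s n = t n) -> vconverges ip s y -> vconverges ip t y.
Proof. by move=> eq_st s_y e /s_y[N sN]; exists N => n /sN; rewrite eq_st. Qed.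

Lemma ip_ccvgl (s : nat -> V) y z :
  vconverges ip s y -> ccvg (fun n => ip (s n) z) (ip y z).
Proof.
move=> s_y e e_gt0.
set d := ip z z.
have d1_gt0 : 0 < d + 1 by apply: ltr_wpDl (ip_ge0 z) ltr01.
set t := e ^+ 2 / (d + 1).
have t_gt0 : 0 < t by rewrite divr_gt0 // exprn_gt0.
have Ret_gt0 : 0 < complex.Re t by move: t_gt0; rewrite ltcE => /andP[_].
have sqrt_gt0 : 0 < Num.sqrt (complex.Re t) by rewrite sqrtr_gt0.
have [N sN] := s_y _ sqrt_gt0.
exists N => n /sN; rewrite -ipBl; set w := s n - y => w_lt.
have ww_lt : ip w w < t.
  rewrite ipnormE -[t]RRe_real ?gtr0_real // ltcR -(sqr_sqrtr (ltW Ret_gt0)).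
  by rewrite ltr_pXn2r ?nnegrE ?sqrtr_ge0.
have : `|ip w z| ^+ 2 < e ^+ 2.
  apply: le_lt_trans (ip_CauchySchwarz w z) _.
  apply: (le_lt_trans (y := t * d)); first by rewrite ler_wpM2r // ltW.
  by rewrite /t mulrAC ltr_pdivrMr // ltr_pM2l ?exprn_gt0 // ltrDl ltr01.
by rewrite ltr_pXn2r // ?nnegrE ?normr_ge0 ?ltW.
Qed.

Lemma ccvg_ip_series (v : nat -> V) (f : nat -> R[i]) y w :
  vconverges ip (fun n => \sum_(j < n) f j *: v j) y ->
  ccvg (fun n => \sum_(j < n) f j * ip (v j) w) (ip y w).
Proof.
move=> sum_y; apply: ccvg_ext (ip_ccvgl w sum_y) => n.
by rewrite ip_suml; apply: eq_bigr => j _; rewrite ipZl.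
Qed.

Lemma ccvg_weighted_eq0 (v : nat -> V) (c : nat -> R[i]) x k :
  (forall j, 0 <= c j) ->
  ccvg (fun n => \sum_(j < n) ip x (v j) * c j * ip (v j) x) 0 ->
  c k = 0 \/ ip x (v k) = 0.
Proof.
move=> c_ge0 sum0.
have term_ge0 j : 0 <= c j * (ip x (v j) * (ip x (v j))^*).
  exact: mulr_ge0 (c_ge0 j) (mul_conjC_ge0 _).
have sum0' : ccvg (fun n => \sum_(j < n) c j * (ip x (v j) * (ip x (v j))^*)) 0.
  by apply: ccvg_ext sum0 => n; apply: eq_bigr => j _; rewrite [ip (v j) x]ipC; ring.
have := ccvg_psumr_eq0 k term_ge0 sum0'.
by move/eqP; rewrite mulf_eq0 mul_conjC_eq0 => /orP[/eqP|/eqP]; [left|right].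
Qed.

Section OrthogonalProjection.
Variable P : V -> V.
Hypothesis P_proj : orth_proj ip P.

Lemma projK x : P (P x) = P x.
Proof. by case: P_proj => _ []. Qed.

Lemma proj_sym x y : ip (P x) y = ip x (P y).
Proof. by case: P_proj => _ []. Qed.

Lemma projD x y : P (x + y) = P x + P y.
Proof. by case: P_proj => -[P_lin _] _; have := P_lin 1 x y; rewrite !scale1r. Qed.

Lemma proj0 : P 0 = 0.
Proof. by apply: (addrI (P 0)); rewrite -projD !addr0. Qed.

Lemma projZ a x : P (a *: x) = a *: P x.
Proof.
by case: P_proj => -[P_lin _] _; have := P_lin a x 0; rewrite !addr0 proj0 addr0.
Qed.

Lemma projB x y : P (x - y) = P x - P y.
Proof. by rewrite projD -scaleN1r projZ scaleN1r. Qed.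

Lemma ip_proj x : ip (P x) x = ip (P x) (P x).
Proof. by rewrite -{1}projK proj_sym. Qed.

Lemma ip_proj_compl x : ip (x - P x) (x - P x) = ip x x - ip (P x) x.
Proof. by rewrite ipBl !ipBr -ip_proj -[ip x (P x)]proj_sym; ring. Qed.

End OrthogonalProjection.

Section DualChannel.
Variables u v : nat -> V.
Hypothesis u_unit : forall k, ip (u k) (u k) = 1.
Hypothesis v_resolves : resolves_identity ip v.

Lemma ccvg_resolution x w :
  ccvg (fun n => \sum_(j < n) ip x (v j) * ip (v j) w) (ip x w).
Proof. exact: (ccvg_ip_series (f := fun j => ip x (v j)) w (v_resolves x)). Qed.

Lemma dual_fixed_of_commute P :
  (forall k x, P (rank1 ip (u k) (v k) x) = rank1 ip (u k) (v k) (P x)) ->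
  dual_fixed ip u v P.
Proof.
move=> P_comm x; apply: vconverges_ext (v_resolves (P x)) => n.
by apply: eq_bigr => j _; rewrite P_comm /rank1 ipZl u_unit mulr1.
Qed.

Section FixedProjection.
Variable P : V -> V.
Hypothesis P_proj : orth_proj ip P.
Hypothesis P_fixed : dual_fixed ip u v P.

Definition weight k := ip (P (u k)) (u k).

Lemma weight_ge0 k : 0 <= weight k.
Proof. by rewrite /weight (ip_proj P_proj). Qed.

Lemma weight_le1 k : weight k <= 1.
Proof. by rewrite -subr_ge0 -(u_unit k) -(ip_proj_compl P_proj). Qed.

Lemma ccvg_dual_fixed x w :
  ccvg (fun n => \sum_(j < n) ip x (v j) * weight j * ip (v j) w) (ip (P x) w).
Proof.
apply: (ccvg_ip_series (f := fun j => ip x (v j) * weight j)).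
apply: vconverges_ext (P_fixed x) => n.
by apply: eq_bigr => j _; rewrite /rank1 (projZ P_proj) ipZl.
Qed.

Lemma ip_kernel_v k x : weight k != 0 -> P x = 0 -> ip x (v k) = 0.
Proof.
move=> wk_neq0 Px0; have := ccvg_dual_fixed x x; rewrite Px0 ip0l.
by case/(ccvg_weighted_eq0 k weight_ge0) => // wk0; rewrite wk0 eqxx in wk_neq0.
Qed.

Lemma ip_range_v k x : weight k != 1 -> P x = x -> ip x (v k) = 0.
Proof.
move=> wk_neq1 Px_id.
have diff0 := ccvgB (ccvg_resolution x x) (ccvg_dual_fixed x x).
rewrite Px_id subrr in diff0.
have compl0 : ccvg (fun n => \sum_(j < n) ip x (v j) * (1 - weight j) * ip (v j) x) 0.
  by apply: ccvg_ext diff0 => n; rewrite -sumrB; apply: eq_bigr => j _; ring.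
have compl_ge0 j : 0 <= 1 - weight j by rewrite subr_ge0 weight_le1.
case: (ccvg_weighted_eq0 k compl_ge0 compl0) => // /eqP.
by rewrite subr_eq0 eq_sym (negbTE wk_neq1).
Qed.

Lemma proj_v_eq0 k : weight k != 1 -> P (v k) = 0.
Proof.
move=> wk_neq1; apply: ip_eq0; rewrite -(proj_sym P_proj) (projK P_proj).
exact: ip_range_v (projK P_proj (v k)).
Qed.

Lemma proj_v_id k : weight k != 0 -> P (v k) = v k.
Proof.
move=> wk_neq0; apply/eqP; rewrite eq_sym -subr_eq0; apply/eqP/ip_eq0.
have P_compl0 : P (v k - P (v k)) = 0 by rewrite (projB P_proj) (projK P_proj) subrr.
rewrite ipBr (ip_kernel_v wk_neq0 P_compl0) -(proj_sym P_proj).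
by rewrite P_compl0 ip0l subrr.
Qed.

Lemma weight_eq01 k : v k != 0 -> weight k = 0 \/ weight k = 1.
Proof.
move=> vk_neq0; have [|wk_neq0] := eqVneq (weight k) 0; first by left.
have [|wk_neq1] := eqVneq (weight k) 1; first by right.
by move: vk_neq0; rewrite -(proj_v_id wk_neq0) (proj_v_eq0 wk_neq1) eqxx.
Qed.

Lemma proj_vE k : P (v k) = weight k *: v k.
Proof.
have [wk0|wk_neq0] := eqVneq (weight k) 0.
  by rewrite wk0 scale0r proj_v_eq0 // wk0 eq_sym oner_neq0.
have [wk1|wk_neq1] := eqVneq (weight k) 1; first by rewrite wk1 scale1r proj_v_id.
have vk0 : v k = 0 by rewrite -(proj_v_id wk_neq0) (proj_v_eq0 wk_neq1).
by rewrite vk0 (proj0 P_proj) scaler0.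
Qed.

Lemma proj_uE k : v k != 0 -> P (u k) = weight k *: u k.
Proof.
case/weight_eq01 => [wk0|wk1].
  by rewrite wk0 scale0r; apply: ip_eq0; rewrite -(ip_proj P_proj).
rewrite wk1 scale1r; apply/eqP; rewrite eq_sym -subr_eq0; apply/eqP/ip_eq0.
by rewrite (ip_proj_compl P_proj) u_unit -/(weight k) wk1 subrr.
Qed.

Lemma proj_rank1_commute k x :
  P (rank1 ip (u k) (v k) x) = rank1 ip (u k) (v k) (P x).
Proof.
have [vk0|vk_neq0] := eqVneq (v k) 0.
  by rewrite /rank1 vk0 !ip0r !scale0r (proj0 P_proj).
rewrite /rank1 (projZ P_proj) (proj_uE vk_neq0) (proj_sym P_proj) proj_vE ipZr.
by rewrite scalerA conj_Creal ?ger0_real ?weight_ge0 // mulrC.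
Qed.

End FixedProjection.

Lemma dual_fixed_iff_commute P : orth_proj ip P ->
  dual_fixed ip u v P <->
  forall k x, P (rank1 ip (u k) (v k) x) = rank1 ip (u k) (v k) (P x).
Proof.
move=> P_proj; split; last exact: dual_fixed_of_commute.
by move=> P_fixed k x; apply: proj_rank1_commute.
Qed.

Lemma dual_fixed_eigvec P : orth_proj ip P -> dual_fixed ip u v P ->
  forall k, v k != 0 -> eigvec P (u k) /\ eigvec P (v k).
Proof.
move=> P_proj P_fixed k vk_neq0.
have uk_neq0 : u k != 0.
  by apply/eqP => uk0; move: (u_unit k); rewrite uk0 ip0l => /eqP; rewrite eq_sym oner_eq0.
split; split=> //; exists (weight P k).
  exact: proj_uE.
exact: proj_vE.
Qed.

Lemma dual_fixed_proj_commute P Q : orth_proj ip P -> orth_proj ip Q ->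
  dual_fixed ip u v P -> dual_fixed ip u v Q -> forall x, P (Q x) = Q (P x).
Proof.
move=> P_proj Q_proj P_fixed Q_fixed x; apply: ipl_inj => w.
rewrite (proj_sym P_proj (Q x)) (proj_sym Q_proj (P x)).
apply: ccvg_unique (ccvg_dual_fixed Q_proj Q_fixed x (P w)) _.
apply: ccvg_ext (ccvg_dual_fixed P_proj P_fixed x (Q w)) => n.
apply: eq_bigr => j _; rewrite -(proj_sym P_proj) -(proj_sym Q_proj).
by rewrite (proj_vE P_proj P_fixed) (proj_vE Q_proj Q_fixed) !ipZl; ring.
Qed.

End DualChannel.
End InnerProductSpace.

Unset Implicit Arguments.

Theorem proposition3p3 (R : realType) (V : lmodType R[i]) (ip : V -> V -> R[i])
  (hH : separable_inf_hilbert ip) (u v : nat -> V)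
  (hu : forall k, ipnorm ip (u k) = 1) (hv : resolves_identity ip v) :
  (forall P : V -> V, orth_proj ip P ->
     (dual_fixed ip u v P <->
      forall k x, P (rank1 ip (u k) (v k) x) = rank1 ip (u k) (v k) (P x)))
  /\ (forall P : V -> V, orth_proj ip P -> dual_fixed ip u v P ->
     forall k, v k != 0 -> eigvec P (u k) /\ eigvec P (v k))
  /\ (forall P Q : V -> V, orth_proj ip P -> orth_proj ip Q ->
     dual_fixed ip u v P -> dual_fixed ip u v Q ->
     forall x, P (Q x) = Q (P x)).
Proof.
case: hH => ip_linearl ipC ip_ge0 ip_eq0 _ _ _.
have u_unit k : ip (u k) (u k) = 1 by rewrite (ipnormE ip_ge0) hu expr1n.
split; [|split].
- by move=> P; apply: dual_fixed_iff_commute.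
- by move=> P; apply: dual_fixed_eigvec.
- by move=> P Q; apply: dual_fixed_proj_commute.
Qed.
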